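(* Fix $(u_\pm,v_\pm)$ with $v_\pm>0$ and $u_->u_+$. For $\epsilon_1,\epsilon_2>0$ let $(u_*^{\epsilon_1\epsilon_2},v_*^{\epsilon_1\epsilon_2})$ be the intermediate state of the two-shock Riemann solution of the perturbed Brio system with data $(u_\pm,v_\pm)$. Then $\lim_{\epsilon_1,\epsilon_2\to0}v_*^{\epsilon_1\epsilon_2}=+\infty$.
   Context: Perturbed Brio system: $u_t+(\tfrac12u^2+\tfrac12\epsilon_1v^2)_x=0$, $v_t+(uv-\epsilon_2v)_x=0$, $\epsilon_1,\epsilon_2>0$, $v>0$, with Riemann data $(u,v)(0,x)=(u_-,v_-)$ for $x<0$, $(u_+,v_+)$ for $x>0$. A two-shock Riemann solution is one with an intermediate state $(u_*,v_* )$, $v_*>\max(v_-,v_+)$, $u_+<u_*<u_-$, such that $$u_*=u_-+(v_*-v_-)\frac{\epsilon_2-\sqrt{\epsilon_2^2+4\epsilon_1(v_*+v_-)^2}}{v_*+v_-},\qquad u_+=u_*+(v_+-v_* )\frac{\epsilon_2+\sqrt{\epsilon_2^2+4\epsilon_1(v_*+v_+)^2}}{v_*+v_+},$$ with shock speeds $\sigma_1=u_-+\frac{v_*(u_*-u_-)}{v_*-v_-}-\epsilon_2$ and $\sigma_2=u_++\frac{v_*(u_+-u_* )}{v_+-v_*}-\epsilon_2$; the solution equals $(u_-,v_-)$ for $x/t<\sigma_1$, $(u_*,v_* )$ for $\sigma_1<x/t<\sigma_2$, $(u_+,v_+)$ for $x/t>\sigma_2$. The limit $\epsilon_1,\epsilon_2\to0$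 is taken over parameters for which this two-shock solution exists. *)

From Stdlib Require Import Reals.
Open Scope R_scope.

(* (us, vs) is the intermediate state of a two-shock Riemann solution of the
   perturbed Brio system with parameters e1, e2 and Riemann data
   (um, vm) (left, x<0) and (up, vp) (right, x>0). *)
Definition two_shock_state (e1 e2 um vm up vp us vs : R) : Prop :=
  vs > Rmax vm vp /\
  up < us < um /\
  us = um + (vs - vm) * (e2 - sqrt (e2 ^ 2 + 4 * e1 * (vs + vm) ^ 2)) / (vs + vm) /\
  up = us + (vp - vs) * (e2 + sqrt (e2 ^ 2 + 4 * e1 * (vs + vp) ^ 2)) / (vs + vp).

From Stdlib Require Import Reals Lra Psatz.
Open Scope R_scope.

(* Write t = sqrt e1.  Since sqrt (a^2 + b^2) <= a + b for
   a, b >= 0, each square root in the shock relations is at most linear in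
   the intermediate density:  sqrt (e2^2 + 4 e1 (vs + v)^2) <= e2 + 2 t (vs + v).
   Feeding this into the two Rankine-Hugoniot relations bounds the velocity
   drop across each shock:
     across the 1-shock   um - us <= 2 t (vs - vm),
     across the 2-shock   us - up <= 2 e2 + 2 t (vs - vp),
   so the total drop satisfies  um - up <= 2 e2 + 4 t vs.  The left side is a
   fixed positive number while e2 and t tend to 0, which forces vs -> +oo:
   for e2 < (um - up)/4 and t < (um - up)/(8 K) we get vs > K. *)

(* A square root of a sum of squares is at most the sum of the (nonnegative)
   roots; here in the form needed for the shock relations. *)
Lemma sqrt_shock_le (e1 e2 w : R) :
  0 <= e1 -> 0 <= e2 -> 0 <= w ->
  sqrt (e2 ^ 2 + 4 * e1 * w ^ 2) <= e2 + 2 * sqrt e1 * w.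
Proof.
  intros He1 He2 Hw.
  pose proof (sqrt_pos e1) as Ht.
  pose proof (pow2_sqrt e1 He1) as Ht2.
  set (t := sqrt e1) in *.
  assert (Hrhs : 0 <= e2 + 2 * t * w) by nra.
  rewrite <- (sqrt_pow2 _ Hrhs).
  apply sqrt_le_1_alt.
  assert (0 <= e2 * (t * w)) by (apply Rmult_le_pos; nra).
  rewrite <- Ht2.
  nra.
Qed.

Lemma left_shock_drop (e1 e2 um vm us vs : R) :
  0 <= e1 -> 0 <= e2 -> 0 < vm < vs ->
  us = um + (vs - vm) * (e2 - sqrt (e2 ^ 2 + 4 * e1 * (vs + vm) ^ 2)) / (vs + vm) ->
  um - us <= 2 * sqrt e1 * (vs - vm).
Proof.
  intros He1 He2 Hv Hus.
  set (S := sqrt (e2 ^ 2 + 4 * e1 * (vs + vm) ^ 2)) in Hus.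
  assert (HS : S <= e2 + 2 * sqrt e1 * (vs + vm)) by (apply sqrt_shock_le; lra).
  assert (Hjump : (um - us) * (vs + vm) = (vs - vm) * (S - e2)).
  { rewrite Hus. field. lra. }
  apply (Rmult_le_reg_r (vs + vm)); [lra |].
  rewrite Hjump.
  assert (0 <= vs - vm) by lra.
  nra.
Qed.

Lemma right_shock_drop (e1 e2 us vs up vp : R) :
  0 <= e1 -> 0 <= e2 -> 0 < vp < vs ->
  up = us + (vp - vs) * (e2 + sqrt (e2 ^ 2 + 4 * e1 * (vs + vp) ^ 2)) / (vs + vp) ->
  us - up <= 2 * e2 + 2 * sqrt e1 * (vs - vp).
Proof.
  intros He1 He2 Hv Hup.
  set (S := sqrt (e2 ^ 2 + 4 * e1 * (vs + vp) ^ 2)) in Hup.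
  assert (HS : S <= e2 + 2 * sqrt e1 * (vs + vp)) by (apply sqrt_shock_le; lra).
  assert (Hjump : (us - up) * (vs + vp) = (vs - vp) * (e2 + S)).
  { rewrite Hup. field. lra. }
  apply (Rmult_le_reg_r (vs + vp)); [lra |].
  rewrite Hjump.
  assert (0 <= e2 * vp) by (apply Rmult_le_pos; lra).
  nra.
Qed.

Lemma two_shock_drop (e1 e2 um vm up vp us vs : R) :
  0 <= e1 -> 0 <= e2 -> 0 < vm -> 0 < vp ->
  two_shock_state e1 e2 um vm up vp us vs ->
  um - up <= 2 * e2 + 4 * sqrt e1 * vs.
Proof.
  intros He1 He2 Hvm Hvp [Hvs [_ [Hus Hup]]].
  pose proof (Rmax_l vm vp). pose proof (Rmax_r vm vp).
  pose proof (sqrt_pos e1).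
  pose proof (left_shock_drop e1 e2 um vm us vs He1 He2 ltac:(lra) Hus).
  pose proof (right_shock_drop e1 e2 us vs up vp He1 He2 ltac:(lra) Hup).
  nra.
Qed.

Theorem lemma5p1 (um vm up vp : R) (hvm : 0 < vm) (hvp : 0 < vp) (hu : up < um) :
  forall M : R, exists delta : R, 0 < delta /\
    forall e1 e2 us vs : R,
      0 < e1 < delta -> 0 < e2 < delta ->
      two_shock_state e1 e2 um vm up vp us vs ->
      M < vs.
Proof.
  intro M.
  set (D := um - up). set (K := Rmax M 1). set (c := D / (8 * K)).
  assert (HK : 1 <= K) by apply Rmax_r.
  assert (HMK : M <= K) by apply Rmax_l.
  assert (Hc : 0 < c) by (unfold c, D; apply Rdiv_lt_0_compat; lra).
  assert (HcK : 8 * c * K = D) by (unfold c; field; lra).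
  exists (Rmin (D / 4) (c ^ 2)); split.
  { apply Rmin_glb_lt; unfold D; nra. }
  intros e1 e2 us vs He1 He2 Hstate.
  pose proof (Rmin_l (D / 4) (c ^ 2)). pose proof (Rmin_r (D / 4) (c ^ 2)).
  pose proof (two_shock_drop e1 e2 um vm up vp us vs ltac:(lra) ltac:(lra) hvm hvp Hstate).
  assert (Ht : sqrt e1 < c).
  { rewrite <- (sqrt_pow2 c) by lra. apply sqrt_lt_1_alt; lra. }
  pose proof (sqrt_pos e1).
  destruct (Rlt_or_le M vs) as [Hlt | Hle]; [exact Hlt | exfalso].
  assert (sqrt e1 * vs <= sqrt e1 * K) by (apply Rmult_le_compat_l; lra).
  unfold D in *. nra.
Qed.
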